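(* For every finite graph $G$, $\mathrm{mcw}(G) \leq \mathrm{tw}(G)+2$.
   Context: The tree-width $\mathrm{tw}(G)$ is the minimum width (largest bag size minus one) of a tree decomposition of $G$ (a tree $T$ with bags $B_i\subseteq V$ covering all vertices and all edges, such that for each vertex the nodes whose bags contain it form a connected subtree). A multi-$k$-expression is built as follows, where each vertex carries a (possibly empty) set of labels from $\{1,\dots,k\}$: atoms $m\langle i_1,\dots,i_\ell\rangle$ (with $m$ a positive integer and $i_1<\dots<i_\ell\le k$, possibly $\ell=0$) create $m$ vertices, each with label set $\{i_1,\dots,i_\ell\}$; $\eta_{i,j}$ creates an edge between every vertex having label $i$ and every vertex having label $j$, allowed only when no vertex has both labels $i$ and $j$; $\rho_{i\to S}$ for $S\subseteq\{1,\dots,k\}$ replaces label $i$ by the set $S$ (a vertex with label set $S'\ni i$ gets $(S'\setminus\{i\})\cup S$); $\varepsilon_i$ deletes label $i$ from all vertices; $\oplus$ is disjoint union. The generated graph is obtained by deleting all labels. The multi-clique-width $\mathrm{mcw}(G)$ is the smallest $k$ such that $G$ is generated by a multi-$k$-expression. *)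

From mathcomp Require Import all_boot.
Set Implicit Arguments. Unset Strict Implicit. Unset Printing Implicit Defensive.

Definition simple_graph (V : finType) (e : rel V) : Prop :=
  symmetric e /\ irreflexive e.

Definition is_tree (I : finType) (t : rel I) : Prop :=
  [/\ symmetric t, irreflexive t, 0 < #|I|,
      (forall x y : I, connect t x y) &
      (forall s : seq I, 3 <= size s -> uniq s -> ~~ cycle t s)].

Definition tree_decomposition (V : finType) (e : rel V)
    (I : finType) (t : rel I) (B : I -> {set V}) : Prop :=
  [/\ is_tree t,
      (forall v : V, exists i : I, v \in B i),
      (forall u v : V, e u v -> exists i : I, (u \in B i) && (v \in B i)) &
      (forall (v : V) (i j : I), v \in B i -> v \in B j ->
          connect [rel a b | [&& t a b, v \in B a & v \in B b]] i j)].

Definition td_width (V I : finType) (B : I -> {set V}) : nat :=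
  (\max_(i : I) #|B i|).-1.

Definition tw_le (V : finType) (e : rel V) (w : nat) : Prop :=
  exists (I : finType) (t : rel I) (B : I -> {set V}),
    tree_decomposition e t B /\ td_width B <= w.

(* Labels {1,...,k} are represented by 'I_k. *)
Inductive mexpr (k : nat) : Type :=
| MAtom  of nat & {set 'I_k}             (* m<S> : m vertices, label set S *)
| MEta   of 'I_k & 'I_k & mexpr k
| MRho   of 'I_k & {set 'I_k} & mexpr k
| MEps   of 'I_k & mexpr k
| MUnion of mexpr k & mexpr k.

(* A labelled graph with vertices 0, ..., n-1. *)
Record lgraph (k : nat) := LGraph {
  lg_n   : nat;
  lg_lab : nat -> {set 'I_k};
  lg_adj : nat -> nat -> bool }.

Fixpoint meval (k : nat) (x : mexpr k) : lgraph k :=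
  match x with
  | MAtom m L => LGraph m (fun _ => L) (fun _ _ => false)
  | MEta i j x1 =>
      let g := meval x1 in
      LGraph (lg_n g) (lg_lab g)
        (fun u v => [|| lg_adj g u v,
                        (i \in lg_lab g u) && (j \in lg_lab g v) |
                        (j \in lg_lab g u) && (i \in lg_lab g v)])
  | MRho i L x1 =>
      let g := meval x1 in
      LGraph (lg_n g)
        (fun u => if i \in lg_lab g u then (lg_lab g u :\ i) :|: L
                  else lg_lab g u)
        (lg_adj g)
  | MEps i x1 =>
      let g := meval x1 in
      LGraph (lg_n g) (fun u => lg_lab g u :\ i) (lg_adj g)
  | MUnion x1 x2 =>
      let g1 := meval x1 in
      let g2 := meval x2 in
      let n1 := lg_n g1 in
      LGraph (n1 + lg_n g2)
        (fun u => if u < n1 then lg_lab g1 u else lg_lab g2 (u - n1))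
        (fun u v => if (u < n1) && (v < n1) then lg_adj g1 u v
                    else if (n1 <= u) && (n1 <= v)
                         then lg_adj g2 (u - n1) (v - n1)
                         else false)
  end.

Fixpoint mvalid (k : nat) (x : mexpr k) : bool :=
  match x with
  | MAtom m _ => 0 < m
  | MEta i j x1 =>
      mvalid x1 &&
      [forall u : 'I_(lg_n (meval x1)),
         ~~ ((i \in lg_lab (meval x1) u) && (j \in lg_lab (meval x1) u))]
  | MRho _ _ x1 => mvalid x1
  | MEps _ x1 => mvalid x1
  | MUnion x1 x2 => mvalid x1 && mvalid x2
  end.

Definition mgenerates (k : nat) (x : mexpr k) (V : finType) (e : rel V) : Prop :=
  mvalid x /\
  exists f : V -> 'I_(lg_n (meval x)),
    bijective f /\ forall u v : V, e u v = lg_adj (meval x) (f u) (f v).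

Definition mcw_le (V : finType) (e : rel V) (k : nat) : Prop :=
  exists k', k' <= k /\ exists x : mexpr k', mgenerates x e.

(* Walk down a tree decomposition (T, B) of width w.  For a set S of vertices
   whose neighbors outside S all lie in one bag B i, color B i injectively
   with w + 1 colors and build G[S] so that each vertex carries the colors of
   its missing neighbors, one further label staying free.  If S meets B i,
   build S minus a vertex v of the bag and add v with the free label, joining
   it to the vertices waiting for its color.  Otherwise S lies in components
   of T - i; the part in the component of a neighbor n of i is built at n,
   after recoloring B n consistently on B i :&: B n, and the rest again at i.
   The w + 1 colors and the free label make w + 2 labels. *)

From mathcomp Require Import all_boot.
Set Implicit Arguments. Unset Strict Implicit. Unset Printing Implicit Defensive.

Definition avoid (T : finType) (r : rel T) (i : T) : rel T :=
  [rel x y | [&& r x y, x != i & y != i]].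

Section Avoid.
Variables (T : finType) (r : rel T).

Lemma connect_avoid_last a i :
  connect r a i -> a != i -> exists2 m, r m i & connect (avoid r i) a m.
Proof.
move/connectP=> [p pth lst].
elim: p a pth lst => [|y p IH] a /=; first by move=> _ ->; rewrite eqxx.
case/andP=> ray pth lst ai.
case: (eqVneq y i) => [yi|yi]; first by exists a; [rewrite -yi | exact: connect0].
have [m rmi cym] := IH y pth lst yi.
by exists m => //; apply: connect_trans cym; apply: connect1; apply/and3P.
Qed.

Lemma avoid_path_neq i x p : path (avoid r i) x p -> all (fun y => y != i) p.
Proof.
elim: p x => [|y p IH] x //=.
by case/andP=> /and3P[_ _ yi] /IH ->; rewrite yi.
Qed.

Lemma connect_avoid_to i a : connect (avoid r i) a i -> a = i.
Proof.
move/connectP=> [p pth lst].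
case/lastP: p pth lst => [|p y] //=.
rewrite rcons_path last_rcons => /andP[_ /and3P[_ _ yi]] ey.
by rewrite -ey eqxx in yi.
Qed.

End Avoid.

Section Tree.
Variables (I : finType) (t : rel I).
Hypothesis tsym : symmetric t.
Hypothesis tirr : irreflexive t.
Hypothesis tacyclic : forall s : seq I, 3 <= size s -> uniq s -> ~~ cycle t s.

Lemma avoid_connect_sym i : connect_sym (avoid t i).
Proof.
apply: sym_connect_sym => x y /=.
by rewrite /avoid /= tsym; case: (t y x); case: (x != i); case: (y != i).
Qed.

(* Otherwise a shortest path from n to n' in t - i closes a cycle through i. *)
Lemma tree_neighbor_component_uniq i n n' :
  t i n -> t i n' -> connect (avoid t i) n n' -> n = n'.
Proof.
move=> tin tin' /connectP[p pth lst].
apply/eqP; apply/negPn/negP=> nn'.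
case: (shortenP pth) lst => p' pth' up' _ lst.
have ni : n != i by apply: contraTneq tin => ->; rewrite tirr.
have size_cyc : 3 <= size (i :: n :: p').
  by case: p' {pth' up'} lst => [/= E|//]; rewrite E eqxx in nn'.
have uniq_cyc : uniq (i :: n :: p').
  rewrite cons_uniq up' andbT inE negb_or eq_sym ni /=.
  by apply/negP=> /(allP (avoid_path_neq pth')); rewrite eqxx.
have : cycle t (i :: n :: p').
  rewrite /= tin /= -cats1 cat_path /= andbT -lst tsym tin' andbT.
  by apply: sub_path pth' => x y /and3P[].
by apply/negP; apply: tacyclic.
Qed.

Lemma tree_component_neighbor a i :
  (forall x y : I, connect t x y) -> a != i ->
  exists2 n, t i n & connect (avoid t i) a n.
Proof.
move=> tconn ai.
have [m tmi cam] := connect_avoid_last (tconn a i) ai.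
by exists m; rewrite // tsym.
Qed.

Lemma connect_avoid_neighbor i n a b : t i n -> connect (avoid t i) a n ->
  connect (avoid t n) a b -> connect (avoid t i) a b.
Proof.
move=> tin can /connectP[p pth ->] {b}.
elim: p a can pth => [|y p IH] a can /=; first by move=> _; exact: connect0.
case/andP=> /and3P[tay an yn] pth.
have ai : a != i.
  apply: contraTneq can => ->; rewrite avoid_connect_sym.
  by apply/negP=> /connect_avoid_to ni; rewrite ni tirr in tin.
have yi : y != i.
  apply: contraNneq an => yi; subst y; apply/eqP.
  by apply: tree_neighbor_component_uniq _ tin can; rewrite tsym.
have ay : avoid t i a y by apply/and3P.
apply: connect_trans (connect1 ay) (IH y _ pth).
by apply: connect_trans can; rewrite avoid_connect_sym; apply: connect1.
Qed.

End Tree.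

Lemma extend_coloring (V : finType) k (X A : {set V}) (c : V -> 'I_k.+1) :
  #|X| <= k.+1 -> {in A &, injective c} ->
  exists c' : V -> 'I_k.+1, {in X &, injective c'} /\ {in X :&: A, c' =1 c}.
Proof.
move=> leXk cinj.
set A' := X :&: A; set D := X :\: A; set F := ~: (c @: A').
have leDF : #|D| <= #|F|.
  have -> : #|F| = k.+1 - #|A'|.
    rewrite cardsCs setCK card_ord card_in_imset //.
    by move=> u v /setIP[_ uA] /setIP[_ vA]; apply: cinj.
  by rewrite cardsD leq_sub2r.
pose fresh z := nth ord0 (enum F) (index z (enum D)).
have idx_lt z : z \in D -> index z (enum D) < size (enum F).
  by move=> zD; rewrite -cardE (leq_trans _ leDF) // cardE index_mem mem_enum.
have freshF z : z \in D -> fresh z \in F.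
  by move=> zD; rewrite -mem_enum mem_nth ?idx_lt.
exists (fun z => if z \in D then fresh z else c z); split=> [u v uX vX|z /setIP[_ zA]].
- have inA z : z \in X -> z \notin D -> z \in A.
    by rewrite inE => zX; rewrite zX andbT negbK.
  have cA z : z \in X -> z \notin D -> c z \notin F.
    by move=> zX zD; rewrite inE negbK imset_f // inE zX inA.
  case: ifP => uD; case: ifP => vD.
  + move/eqP; rewrite nth_uniq ?enum_uniq ?idx_lt // => /eqP.
    by apply: (index_inj u); rewrite mem_enum.
  + by move=> E; move: (cA _ vX (negbT vD)); rewrite -E freshF.
  + by move=> E; move: (cA _ uX (negbT uD)); rewrite E freshF.
  + by apply: cinj; rewrite ?inA ?vD ?uD.
- by rewrite !inE zA.
Qed.

Section Realize.
Variables (V : finType) (e : rel V).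
Hypothesis e_sym : symmetric e.
Hypothesis eirr : irreflexive e.
Variable w : nat.

Record realizes (x : mexpr w.+2) (S : {set V}) (L : V -> {set 'I_w.+2})
    (g : nat -> V) : Prop := Realizes {
  realizes_valid : mvalid x;
  realizes_inj : forall a b, a < lg_n (meval x) -> b < lg_n (meval x) ->
    g a = g b -> a = b;
  realizes_mem : forall a, a < lg_n (meval x) -> g a \in S;
  realizes_onto : forall v, v \in S -> exists2 a, a < lg_n (meval x) & g a = v;
  realizes_adj : forall a b, a < lg_n (meval x) -> b < lg_n (meval x) ->
    lg_adj (meval x) a b = e (g a) (g b);
  realizes_lab : forall a, a < lg_n (meval x) ->
    lg_lab (meval x) a = L (g a) }.

(* Label [0] is kept free; label [lift ord0 k] stands for color [k].  A
   vertex [u] of [S] carries the colors of its neighbors outside [S]: these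
   are the edges still to be created. *)
Definition out_labels (c : V -> 'I_w.+1) (S : {set V}) (u : V) : {set 'I_w.+2} :=
  [set lift ord0 (c y) | y in [set y | (y \notin S) && e u y]].

Lemma ord0_notin_out_labels c S u : ord0 \notin out_labels c S u.
Proof.
by apply/imsetP=> -[y _ /eqP]; rewrite (negbTE (neq_lift ord0 (c y))).
Qed.

Lemma eq_out_labels c c' (S S' : {set V}) u :
  (forall y, (y \notin S) && e u y = (y \notin S') && e u y) ->
  (forall y, y \notin S' -> e u y -> c y = c' y) ->
  out_labels c S u = out_labels c' S' u.
Proof.
move=> eqS eqc; rewrite /out_labels.
have -> : [set y | (y \notin S) && e u y] = [set y | (y \notin S') && e u y].
  by apply/setP=> y; rewrite !inE eqS.
by apply: eq_in_imset => y; rewrite inE => /andP[yS' euy]; rewrite eqc.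
Qed.

Lemma realizes_ext x S L L' g : realizes x S L g -> {in S, L =1 L'} ->
  realizes x S L' g.
Proof. by case=> h1 h2 h3 h4 h5 h6 E; split=> // a an; rewrite h6 // E // h3. Qed.

Lemma realizes_atom c v :
  realizes (MAtom 1 (out_labels c [set v] v)) [set v] (out_labels c [set v])
    (fun _ => v).
Proof.
split=> //= [[|a] [|b] //| a _ | u]; first by rewrite set11.
by rewrite inE => /eqP->; exists 0.
Qed.

Lemma realizes_union xP xQ P Q L gP gQ :
  realizes xP P L gP -> realizes xQ Q L gQ ->
  {in P, forall u, u \notin Q} -> {in P & Q, forall u y, ~~ e u y} ->
  realizes (MUnion xP xQ) (P :|: Q) L
    (fun a => if a < lg_n (meval xP) then gP a else gQ (a - lg_n (meval xP))).
Proof.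
case=> vP iP mP sP aP lP [vQ iQ mQ sQ aQ lQ] disPQ noePQ.
set nP := lg_n (meval xP).
have subQ a : a < nP + lg_n (meval xQ) -> nP <= a -> a - nP < lg_n (meval xQ).
  by move=> ha an; rewrite ltn_subLR.
have neqPQ a b : a < nP -> b < lg_n (meval xQ) -> gP a <> gQ b.
  by move=> an bn E; move: (disPQ _ (mP a an)); rewrite E mQ.
split=> /=.
- by rewrite vP vQ.
- move=> a b ha hb.
  case: (ltnP a nP) => an; case: (ltnP b nP) => bn.
  + exact: iP.
  + by move=> E; case: (neqPQ _ _ an (subQ _ hb bn) E).
  + by move=> E; case: (neqPQ _ _ bn (subQ _ ha an) (esym E)).
  + move/(iQ _ _ (subQ _ ha an) (subQ _ hb bn)) => E.
    by rewrite -(subnK an) -(subnK bn) E.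
- move=> a ha; case: (ltnP a nP) => an; rewrite inE ?mP ?mQ ?orbT ?subQ //.
- move=> v; rewrite inE => /orP[vinP|vinQ].
    have [a an <-] := sP v vinP; exists a; last by rewrite an.
    exact: leq_trans an (leq_addr _ _).
  have [a an <-] := sQ v vinQ; exists (a + nP); first by rewrite addnC ltn_add2l.
  by rewrite ltnNge leq_addl /= addnK.
- move=> a b ha hb.
  case: (ltnP a nP) => an; case: (ltnP b nP) => bn /=.
  + exact: aP.
  + by apply/esym/negbTE/noePQ; rewrite ?mP ?mQ ?subQ.
  + by rewrite e_sym; apply/esym/negbTE/noePQ; rewrite ?mP ?mQ ?subQ.
  + exact: aQ (subQ _ ha an) (subQ _ hb bn).
- move=> a ha; case: (ltnP a nP) => an; first exact: lP.
  exact/lQ/subQ.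
Qed.

Section AddVertex.
Variables (c : V -> 'I_w.+1) (S : {set V}) (v u : V).
Hypothesis vS : v \in S.
Hypothesis color_v_uniq :
  forall y, y \notin S :\ v -> e u y -> c y = c v -> y = v.

Lemma mem_out_labelsD1 : (lift ord0 (c v) \in out_labels c (S :\ v) u) = e u v.
Proof.
apply/imsetP/idP=> [[y] | euv]; last by exists v; rewrite // inE setD11.
by rewrite inE => /andP[yS euy] /lift_inj cyv; rewrite -(color_v_uniq yS euy).
Qed.

Lemma out_labelsD1 : out_labels c (S :\ v) u :\ lift ord0 (c v) = out_labels c S u.
Proof.
apply/setP=> z; rewrite in_setD1; apply/andP/imsetP.
- case=> zn /imsetP[y]; rewrite inE => /andP[yn euy] zE.
  exists y => //; rewrite inE euy andbT.
  apply: contraNN zn => yS; move: yn; rewrite in_setD1 yS andbT negbK => /eqP yv.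
  by rewrite zE yv.
- case=> y; rewrite inE => /andP[yS euy] zE.
  have ySv : y \notin S :\ v by rewrite in_setD1 negb_and yS orbT.
  split; last by apply/imsetP; exists y; rewrite // inE ySv.
  apply: contraNneq yS; rewrite zE => /lift_inj/(color_v_uniq ySv euy) ->.
  exact: vS.
Qed.

End AddVertex.

(* [v] enters with the free label [0]; [eta] joins it to the vertices waiting
   for color [c v], which is then retired, and [rho] gives [v] its own labels. *)
Definition add_vertex_expr (x : mexpr w.+2) (c : V -> 'I_w.+1) (S : {set V}) v :=
  MRho ord0 (out_labels c S v) (MEps (lift ord0 (c v))
    (MEta ord0 (lift ord0 (c v)) (MUnion x (MAtom 1 [set ord0])))).

Lemma realizes_add_vertex x c (S : {set V}) v g : v \in S ->
  realizes x (S :\ v) (out_labels c (S :\ v)) g ->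
  (forall u y, u \in S :\ v -> y \notin S :\ v -> e u y -> c y = c v -> y = v) ->
  realizes (add_vertex_expr x c S v) S (out_labels c S)
    (fun a => if a < lg_n (meval x) then g a else v).
Proof.
move=> vS [vx ix mx sx ax lx] cv_uniq.
set n := lg_n (meval x).
have lt_n1 a : a < n + 1 -> a < n \/ a = n.
  by rewrite addn1 ltnS leq_eqVlt => /orP[/eqP->|]; [right|left].
have ord0_lab a : a < n -> ord0 \notin lg_lab (meval x) a.
  by move=> an; rewrite lx // ord0_notin_out_labels.
have cv_uniq_g a : a < n -> forall y, y \notin S :\ v ->
    e (g a) y -> c y = c v -> y = v.
  by move=> an y; apply: cv_uniq (mx _ an).
set cv := lift ord0 (c v).
have cv0 : (cv == ord0) = false by apply/negbTE; rewrite eq_sym neq_lift.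
split=> /=.
- rewrite vx /=; apply/forallP=> a /=.
  case: (lt_n1 a (ltn_ord a)) => [an|->]; first by rewrite an (negbTE (ord0_lab _ an)).
  by rewrite ltnn !inE cv0 andbF.
- have gv a : a < n -> g a <> v by move=> an E; move: (mx _ an); rewrite E setD11.
  move=> a b ha hb.
  case: (lt_n1 a ha) => [an|->]; case: (lt_n1 b hb) => [bn|->];
    rewrite ?an ?bn ?ltnn //.
  + exact: ix.
  + by move/gv.
  + by move/esym/gv.
- move=> a ha; case: (lt_n1 a ha) => [an|->]; rewrite ?an ?ltnn //.
  by move: (mx _ an); rewrite in_setD1 => /andP[].
- move=> u uS; case: (eqVneq u v) => [->|uv]; first by exists n; rewrite ?addn1 ?ltnn.
  have uSv : u \in S :\ v by rewrite in_setD1 uv uS.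
  have [a an <-] := sx u uSv.
  by exists a; rewrite ?an // addn1 ltnS ltnW.
- rewrite -/n => a b ha hb.
  case: (lt_n1 a ha) => [an|->]; case: (lt_n1 b hb) => [bn|->].
  + rewrite an bn /= (negbTE (ord0_lab a an)) (negbTE (ord0_lab b bn)) /= andbF.
    by rewrite orbF; apply: ax.
  + rewrite an ltnn andbF leqNgt an /= (negbTE (ord0_lab a an)) /= inE eqxx.
    by rewrite lx // mem_out_labelsD1 ?andbT //; apply: cv_uniq_g.
  + rewrite bn ltnn /= (negbTE (ord0_lab b bn)) /= inE eqxx andbF /= orbF if_same.
    by rewrite (e_sym v) lx // mem_out_labelsD1 //; apply: cv_uniq_g.
  + by rewrite ltnn /= !inE cv0 /= eirr if_same.
- rewrite -/n => a ha.
  case: (lt_n1 a ha) => [an|->].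
    rewrite an in_setD1 (negbTE (ord0_lab a an)) andbF.
    by rewrite lx // out_labelsD1 //; apply: cv_uniq_g.
  rewrite ltnn !inE eqxx eq_sym cv0 /=.
  apply/setP=> z; rewrite !inE.
  by case: (eqVneq z ord0) => [->|] /=; rewrite ?ord0_notin_out_labels ?andbF.
Qed.

Lemma realizes_mgenerates x L g : realizes x [set: V] L g -> mgenerates x e.
Proof.
move=> R; split; first exact: realizes_valid R.
pose h (a : 'I_(lg_n (meval x))) := g a.
have hinj : injective h.
  by move=> a b /(realizes_inj R (ltn_ord a) (ltn_ord b)) E; apply: val_inj.
have card_le : #|V| <= #|'I_(lg_n (meval x))|.
  rewrite -cardsT (leq_trans _ (leq_imset_card h _)) // subset_leq_card //.
  apply/subsetP=> v _; have [a an <-] := realizes_onto R (in_setT v).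
  by apply/imsetP; exists (Ordinal an).
have [f hf fh] := inj_card_bij hinj card_le.
exists f; split; first by exists h.
move=> u v; rewrite (realizes_adj R (ltn_ord (f u)) (ltn_ord (f v))).
by have := fh u; have := fh v; rewrite /h => -> ->.
Qed.

End Realize.

Section Build.
Variables (V : finType) (e : rel V).
Hypothesis e_sym : symmetric e.
Hypothesis eirr : irreflexive e.
Variables (w : nat) (I : finType) (t : rel I) (B : I -> {set V}).
Hypothesis tsym : symmetric t.
Hypothesis tirr : irreflexive t.
Hypothesis tacyclic : forall s : seq I, 3 <= size s -> uniq s -> ~~ cycle t s.
Hypothesis tconn : forall x y : I, connect t x y.
Hypothesis bag_cover : forall v : V, exists i : I, v \in B i.
Hypothesis bag_edge :
  forall u v : V, e u v -> exists i : I, (u \in B i) && (v \in B i).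
Hypothesis bag_subtree : forall (v : V) (i j : I), v \in B i -> v \in B j ->
  connect [rel a b | [&& t a b, v \in B a & v \in B b]] i j.
Hypothesis bag_size : forall i, #|B i| <= w.+1.

Definition frontier_in (S : {set V}) (i : I) :=
  forall u y, u \in S -> y \notin S -> e u y -> y \in B i.

Definition constructible (S : {set V}) (i : I) :=
  forall c : V -> 'I_w.+1, {in B i &, injective c} ->
  exists x g, realizes e x S (out_labels e c S) g.

Lemma frontier_inD1 (S : {set V}) i v :
  v \in B i -> frontier_in S i -> frontier_in (S :\ v) i.
Proof.
move=> vB frS u y; rewrite !in_setD1 => /andP[_ uS] yS euy.
by case: (eqVneq y v) => [->|yv] //; apply: frS euy; rewrite yv in yS.
Qed.

Lemma constructible_addD1 (S : {set V}) i v :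
  v \in S -> v \in B i -> frontier_in S i ->
  constructible (S :\ v) i -> constructible S i.
Proof.
move=> vS vB frS IH c cinj; have [x [g R]] := IH c cinj.
exists (add_vertex_expr e x c S v), (fun a => if a < lg_n (meval x) then g a else v).
apply: (realizes_add_vertex e_sym eirr vS R) => u y uS yS euy; apply: cinj => //.
exact: frontier_inD1 uS yS euy.
Qed.

Lemma bag_subtree_avoid s i a a' : s \notin B i -> s \in B a -> s \in B a' ->
  connect (avoid t i) a a'.
Proof.
move=> si sa sa'; apply: connect_sub (bag_subtree sa sa') => x y /and3P[txy sx sy].
apply/connect1/and3P; split=> //.
  by apply: contraTneq sx => ->.
by apply: contraTneq sy => ->.
Qed.

Definition side (S : {set V}) (i n : I) : {set V} :=
  [set s in S | [exists a, (s \in B a) && connect (avoid t i) a n]].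

Section Side.
Variables (S : {set V}) (i n : I).
Hypothesis SBi : S :&: B i = set0.
Hypothesis tin : t i n.

Lemma notin_bag s : s \in S -> s \notin B i.
Proof.
move=> sS; apply/negP=> sB.
have : s \in S :&: B i by apply/setIP.
by rewrite SBi inE.
Qed.

Lemma side_sub s : s \in side S i n -> s \in S.
Proof. by rewrite inE => /andP[]. Qed.

Lemma side_bag_connect s a :
  s \in side S i n -> s \in B a -> connect (avoid t i) a n.
Proof.
rewrite inE => /andP[sS /existsP[a' /andP[sa' ca'n]]] sa.
exact: connect_trans (bag_subtree_avoid (notin_bag sS) sa sa') ca'n.
Qed.

Lemma side_edge_closed u y :
  u \in side S i n -> y \in S -> e u y -> y \in side S i n.
Proof.
move=> uP yS euy; have [b /andP[ub yb]] := bag_edge euy.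
by rewrite inE yS; apply/existsP; exists b; rewrite yb (side_bag_connect uP ub).
Qed.

(* An outside neighbor [y] of the side lies in [B i] and in a bag of the
   component; the path between these bags enters [i] through [n]. *)
Lemma frontier_side : frontier_in S i -> frontier_in (side S i n) n.
Proof.
move=> frS u y uP yP euy.
have yS : y \notin S by apply: contraNN yP => yS; apply: side_edge_closed euy.
have yBi := frS u y (side_sub uP) yS euy.
have [b /andP[ub yb]] := bag_edge euy.
have bi : b != i by apply: contraTneq ub => ->; apply: notin_bag (side_sub uP).
have [m /and3P[tmi ym _] cbm] := connect_avoid_last (bag_subtree yb yBi) bi.
suff -> : n = m by [].
apply: (tree_neighbor_component_uniq tsym tirr tacyclic tin); first by rewrite tsym.
rewrite avoid_connect_sym //; apply: connect_trans (side_bag_connect uP ub).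
rewrite avoid_connect_sym //; apply: connect_sub cbm.
by move=> x z /and3P[/and3P[txz _ _] xi zi]; apply/connect1/and3P.
Qed.

Lemma side_recolor c : frontier_in S i -> {in B i &, injective c} ->
  exists cn : V -> 'I_w.+1, {in B n &, injective cn} /\
    {in side S i n, out_labels e cn (side S i n) =1 out_labels e c S}.
Proof.
move=> frS cinj; have [cn [cninj cnc]] := extend_coloring (bag_size n) cinj.
exists cn; split=> // u uP; apply: eq_out_labels => y.
  case euy: (e u y); rewrite ?andbF ?andbT //.
  congr negb; apply/idP/idP=> [/side_sub // | yS].
  exact: side_edge_closed uP yS euy.
move=> yS euy; have yP : y \notin side S i n by apply: contraNN yS; apply: side_sub.
by rewrite cnc // inE (frontier_side frS uP yP euy) (frS u y (side_sub uP) yS euy).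
Qed.

Lemma frontier_rest : frontier_in S i -> frontier_in (S :\: side S i n) i.
Proof.
move=> frS u y; rewrite !in_setD => /andP[uP uS] /nandP[/negbNE yP | yS] euy.
  by move: uP; rewrite (side_edge_closed yP uS) // e_sym.
exact: frS euy.
Qed.

Lemma out_labels_rest (c : V -> 'I_w.+1) u : u \in S :\: side S i n ->
  out_labels e c (S :\: side S i n) u = out_labels e c S u.
Proof.
rewrite in_setD => /andP[uP uS]; apply: eq_out_labels => // y.
case euy: (e u y); rewrite ?andbF ?andbT // in_setD negb_and negbK.
case: (boolP (y \in side S i n)) => [yP|_] //=.
by move: uP; rewrite (side_edge_closed yP uS) // e_sym.
Qed.

End Side.

Lemma constructible_move (S : {set V}) i n :
  S :&: B i = set0 -> t i n -> side S i n = S ->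
  frontier_in S i -> constructible S n -> constructible S i.
Proof.
move=> SBi tin PS frS IH c cinj.
have [cn [cninj eqL]] := side_recolor SBi tin frS cinj.
have [x [g R]] := IH cn cninj.
by exists x, g; apply: realizes_ext R _; rewrite PS in eqL.
Qed.

Lemma constructible_split (S : {set V}) i n :
  S :&: B i = set0 -> t i n -> frontier_in S i ->
  constructible (side S i n) n -> constructible (S :\: side S i n) i ->
  constructible S i.
Proof.
move=> SBi tin frS IHP IHQ c cinj.
have [cn [cninj eqLP]] := side_recolor SBi tin frS cinj.
have [xP [gP RP]] := IHP cn cninj.
have [xQ [gQ RQ]] := IHQ c cinj.
have RQ' := realizes_ext RQ (@out_labels_rest S i n SBi c).
have RU := realizes_union e_sym (realizes_ext RP eqLP) RQ'.
have SPQ : side S i n :|: (S :\: side S i n) = S.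
  have /setIidPr {1}<- : side S i n \subset S by apply/subsetP=> s /side_sub.
  exact: setID.
rewrite SPQ in RU; eexists; eexists; apply: RU.
  by move=> u uP; rewrite in_setD uP.
move=> u y uP; rewrite in_setD => /andP[yP yS].
by apply: contraNN yP; apply: side_edge_closed uP yS.
Qed.

Lemma side_neighbor (S : {set V}) i : S != set0 -> S :&: B i = set0 ->
  exists2 n, t i n & side S i n != set0.
Proof.
move=> /set0Pn[s sS] SBi; have [a sa] := bag_cover s.
have ai : a != i by apply: contraTneq sa => ->; exact: (notin_bag SBi sS).
have [n tin can] := tree_component_neighbor tsym tconn ai.
exists n => //; apply/set0Pn; exists s.
by rewrite inE sS; apply/existsP; exists a; rewrite sa.
Qed.

Definition bag_nodes (S : {set V}) := [set a | [exists s in S, s \in B a]].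

Definition reach (S : {set V}) i :=
  [set b | [exists a in bag_nodes S, connect (avoid t i) a b]].

(* Each recursive call either shrinks [S], or keeps [S] and moves [i] one step
   towards it, which shrinks [reach S i] or puts a vertex of [S] into the bag. *)
Definition build_measure (S : {set V}) i :=
  #|I|.+2 * #|S| + (#|reach S i| + (S :&: B i == set0)).

Lemma build_measure_ltn_card (S S' : {set V}) i i' :
  #|S'| < #|S| -> build_measure S' i' < build_measure S i.
Proof.
move=> ltS; apply: (@leq_trans (#|I|.+2 * #|S'|.+1)).
  rewrite /build_measure mulnSr ltn_add2l ltnS -addn1.
  exact: leq_add (max_card _) (leq_b1 _).
rewrite /build_measure (leq_trans _ (leq_addr _ _)) //.
by rewrite leq_mul2l ltS orbT.
Qed.

Lemma build_measure_move (S : {set V}) i n : S :&: B i = set0 -> t i n ->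
  side S i n = S -> S != set0 -> build_measure S n < build_measure S i.
Proof.
move=> SBi tin PS /set0Pn[s sS].
have reach_sub : reach S n \subset reach S i.
  apply/subsetP=> b; rewrite !inE => /existsP[a /andP[aS can]].
  apply/existsP; exists a; rewrite aS /=.
  move: (aS); rewrite inE => /existsP[s' /andP[s'S s'a]].
  have cain : connect (avoid t i) a n.
    by apply: (side_bag_connect SBi) s'a; rewrite PS.
  exact: (connect_avoid_neighbor tsym tirr tacyclic tin cain can).
rewrite /build_measure ltn_add2l SBi eqxx.
have [SBn | SBn] := eqVneq (S :&: B n) set0; last first.
  by rewrite addn0 addn1 ltnS subset_leq_card.
rewrite ltn_add2r; apply/proper_card/properP; split=> //; exists n.
  move: (sS); rewrite -{1}PS inE => /andP[_ /existsP[a /andP[sa can]]].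
  rewrite inE; apply/existsP; exists a; rewrite can andbT inE.
  by apply/existsP; exists s; rewrite sS.
rewrite inE; apply/existsP=> -[a /andP[]].
rewrite inE => /existsP[s' /andP[s'S s'a]] /connect_avoid_to an.
by move: SBn => /setP/(_ s'); rewrite !inE s'S -an s'a.
Qed.

Lemma constructible_build m (S : {set V}) i :
  build_measure S i < m -> S != set0 -> frontier_in S i -> constructible S i.
Proof.
elim: m S i => // m IH S i; rewrite ltnS => le_m S0 frS.
have [/set0Pn[v /setIP[vS vB]] | /negPn/eqP SBi] := boolP (S :&: B i != set0).
  have [-> c _ | Sv] := eqVneq S [set v].
    by exists (MAtom 1 (out_labels e c [set v] v)), (fun=> v); apply: realizes_atom.
  apply: (constructible_addD1 vS vB frS (IH _ _ _ _ (frontier_inD1 vB frS))).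
    by apply: leq_trans le_m; apply: build_measure_ltn_card; rewrite (cardsD1 v S) vS.
  by apply: contraNneq Sv => SD0; rewrite -(setD1K vS) SD0 setU0.
have [n tin P0] := side_neighbor S0 SBi.
have sub_PS : side S i n \subset S by apply/subsetP=> s /side_sub.
have [PS | PS] := eqVneq (side S i n) S.
  apply: (constructible_move SBi tin PS frS (IH _ _ _ S0 _)).
    exact: leq_trans (build_measure_move SBi tin PS S0) le_m.
  by rewrite -{1}PS; apply: frontier_side.
have Q0 : S :\: side S i n != set0.
  by rewrite setD_eq0; apply: contraNN PS => sub_SP; rewrite eqEsubset sub_PS.
have ltQ : #|S :\: side S i n| < #|S|.
  by rewrite cardsD (setIidPr sub_PS) ltn_subrL !card_gt0 P0 S0.
have ltP : #|side S i n| < #|S| by rewrite proper_card // properEneq PS sub_PS.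
apply: (constructible_split SBi tin frS).
  apply: IH P0 (frontier_side SBi tin frS).
  exact: leq_trans (build_measure_ltn_card _ _ ltP) le_m.
apply: IH Q0 (frontier_rest SBi frS).
exact: leq_trans (build_measure_ltn_card _ _ ltQ) le_m.
Qed.

End Build.

Lemma td_width_bag_size (V I : finType) (B : I -> {set V}) w :
  td_width B <= w -> forall i, #|B i| <= w.+1.
Proof.
move=> le_w i; apply: leq_trans (leq_bigmax (F := fun j => #|B j|) i) _.
by move: le_w; rewrite /td_width; case: (\max_(j : I) _).
Qed.

Theorem mainTheorem5 (V : finType) (e : rel V) :
  simple_graph e -> 0 < #|V| ->
  forall w : nat, tw_le e w -> mcw_le e (w + 2).
Proof.
move=> [e_sym eirr] /card_gt0P[v0 _] w [I [t [B [td le_w]]]].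
have [[tsym tirr /card_gt0P[i0 _] tconn tacyclic] cover edge subtree] := td.
have bag_size := td_width_bag_size le_w.
have inj0 : {in set0 &, injective (fun _ : V => @ord0 w)} by move=> u v; rewrite inE.
have [c [cinj _]] := extend_coloring (bag_size i0) inj0.
have V0 : [set: V] != set0 by apply/set0Pn; exists v0; rewrite inE.
have frT : frontier_in e B [set: V] i0 by move=> u y _; rewrite in_setT.
have [x [g R]] := constructible_build e_sym eirr tsym tirr tacyclic tconn cover edge
  subtree bag_size (ltnSn _) V0 frT cinj.
exists w.+2; split; first by rewrite addn2.
by exists x; apply: realizes_mgenerates R.
Qed.
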